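(* Let $K$ be a field of characteristic $\neq 2$, $n\ge1$, and let $\mathcal C$ be any EACP over $K$. Then $\mathcal C$ is not a division algebra, i.e. there exist $a,b\in\mathcal C$ with $a\neq0$ such that the equation $ax=b$ has no solution $x\in\mathcal C$.
   Context: An EACP over a field $K$ (characteristic $\neq 2$) is a $K$-algebra $\mathcal C$ with a basis $\{h_1,\dots,h_n,r\}$ (called a natural basis) whose multiplication is determined by bilinearity from $$h_ir=rh_i=\tfrac12\Big(\sum_{j=1}^n a_{ij}h_j+b_ir\Big),\qquad h_ih_j=0\ (i,j=1,\dots,n),\qquad rr=0,$$ for some constants $a_{ij},b_i\in K$. An algebra $\mathcal A$ is a division algebra if for all $a,b\in\mathcal A$ with $a\neq0$ the equations $ax=b$ and $xa=b$ are solvable in $\mathcal A$. *)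

From HB Require Import structures.
From mathcomp Require Import all_boot all_order all_algebra.
Set Implicit Arguments. Unset Strict Implicit. Unset Printing Implicit Defensive.
Import GRing.Theory.
Local Open Scope ring_scope.

Definition bilinear_mul (K : fieldType) (V : vectType K) (mul : V -> V -> V) : Prop :=
  (forall (c : K) (u v w : V), mul (c *: u + v) w = c *: mul u w + mul v w) /\
  (forall (c : K) (u v w : V), mul w (c *: u + v) = c *: mul w u + mul w v).

Definition natural_basis (K : fieldType) (V : vectType K) (n : nat)
    (mul : V -> V -> V) (h : 'I_n -> V) (r : V) (A : 'M[K]_n) (bv : 'rV[K]_n) : Prop :=
  basis_of fullv (r :: [seq h i | i <- enum 'I_n]) /\
  (forall i : 'I_n,
      mul (h i) r = 2%:R^-1 *: (\sum_(j < n) A i j *: h j + bv 0 i *: r)) /\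
  (forall i : 'I_n,
      mul r (h i) = 2%:R^-1 *: (\sum_(j < n) A i j *: h j + bv 0 i *: r)) /\
  (forall i j : 'I_n, mul (h i) (h j) = 0) /\
  mul r r = 0.

Definition is_EACP (K : fieldType) (V : vectType K) (n : nat) (mul : V -> V -> V) : Prop :=
  bilinear_mul mul /\
  exists (h : 'I_n -> V) (r : V) (A : 'M[K]_n) (bv : 'rV[K]_n),
    natural_basis mul h r A bv.

From HB Require Import structures.
From mathcomp Require Import all_boot all_order all_algebra.
Set Implicit Arguments. Unset Strict Implicit. Unset Printing Implicit Defensive.
Import GRing.Theory.
Local Open Scope ring_scope.

(* Since h_i h_j = 0 and h_i r is a fixed vector, left multiplication by any
   h_i maps the natural basis, hence all of C, into the line spanned by h_i r.
   As dim C = n + 1 >= 2, some b lies outside that line, so h_i x = b has no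
   solution.  Neither the factor 1/2 nor the characteristic plays a role. *)

Section SpanArguments.

Variables (K : fieldType) (V W : vectType K).

Lemma linear_span_mem (f : V -> W) (X : seq V) (U : {vspace W}) :
  linear f -> {in X, forall x, f x \in U} -> {in <<X>>%VS, forall v, f v \in U}.
Proof.
move=> f_lin XU.
pose F : {linear V -> W} := HB.pack f (GRing.isLinear.Build K V W *:%R f f_lin).
have /subvP spanX_preim : (<<X>> <= linfun F @^-1: U)%VS.
  by apply/span_subvP => x Xx; rewrite -memv_preim lfunE XU.
by move=> v /spanX_preim; rewrite -memv_preim lfunE.
Qed.

Lemma exists_notin_vspace (U : {vspace V}) :
  (\dim U < \dim {:V})%N -> exists b, b \notin U.
Proof.
move=> dimU_lt; have [basisU | /allPn[b _ bU]] := boolP (all (mem U) (vbasis {:V})).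
  move: dimU_lt; rewrite ltnNge dimvS // -(span_basis (vbasisP fullv)).
  by apply/span_subvP/allP.
by exists b.
Qed.

End SpanArguments.

Section NaturalBasis.

Variables (K : fieldType) (V : vectType K) (n : nat) (mul : V -> V -> V).
Variables (h : 'I_n -> V) (r : V) (A : 'M[K]_n) (bv : 'rV[K]_n).
Hypothesis nat_basis : natural_basis mul h r A bv.

Let X := r :: [seq h i | i <- enum 'I_n].

Let X_basis : basis_of fullv X. Proof. by case: nat_basis. Qed.

Lemma dim_natural_basis : \dim {:V} = n.+1.
Proof. by rewrite (size_basis (X := in_tuple X) X_basis) /= size_map size_enum_ord. Qed.

Lemma natural_basis_neq0 i : h i != 0.
Proof.
move: (basis_free X_basis); rewrite free_cons => /andP[_ /free_not0]; apply.
by apply/mapP; exists i; rewrite ?mem_enum.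
Qed.

Lemma mul_natural_basis_line (mul_linear : forall w, linear (mul w)) i x :
  mul (h i) x \in <[mul (h i) r]>%VS.
Proof.
have [_ [_ [_ [mul_hh _]]]] := nat_basis.
apply: (linear_span_mem (X := X) (mul_linear (h i))).
  move=> y; rewrite in_cons => /predU1P[-> | /mapP[j _ ->]].
    exact: memv_line.
  by rewrite mul_hh mem0v.
by rewrite (eqP (andP X_basis).1) memvf.
Qed.

End NaturalBasis.

Theorem mainTheorem6 (K : fieldType) (n : nat) (V : vectType K) (mul : V -> V -> V) :
  2%N \notin [pchar K] -> (1 <= n)%N -> is_EACP n mul ->
  exists a b : V, a != 0 /\ ~ (exists x : V, mul a x = b).
Proof.
move=> _ n_gt0 [[_ mul_linear] [h [r [A [bv nat_basis]]]]].
have i0 : 'I_n := Ordinal n_gt0.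
have [b b_notin_line] : exists b, b \notin <[mul (h i0) r]>%VS.
  apply: exists_notin_vspace.
  by rewrite (dim_natural_basis nat_basis) dim_vline ltnS; case: (_ != 0).
exists (h i0), b; split; first exact: natural_basis_neq0 nat_basis i0.
case=> x hx_b; move: b_notin_line; rewrite -hx_b.
by rewrite (mul_natural_basis_line nat_basis (fun w c u v => mul_linear c u v w)).
Qed.
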